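(* Let $L_1$ be a fixed point of $L_1^+=(\mathbf{C}_1+\mathbf{D}_1L_1)(\mathbf{A}_1+\mathbf{B}_1L_1)^{-1}$ and let $L_2$ be defined by $L_2^\top = -(B_1 +D_1L_1)(A_1 + B_1^\top L_1)^{-1}$. Then these define the similarity transforms \[ \begin{bmatrix} I & 0 \\-L_1 & I \end{bmatrix} \begin{bmatrix} \mathbf{A}_1 & \mathbf{B}_1\\ \mathbf{C}_1 & \mathbf{D}_1 \end{bmatrix} \begin{bmatrix} I & 0 \\ L_1 & I \end{bmatrix} = \begin{bmatrix} \mathbf{H}_1 & \mathbf{B}_1 \\ 0 & \mathbf{H}_1' \end{bmatrix}, \qquad \begin{bmatrix} I & -L_2\\ 0 & I \end{bmatrix} \begin{bmatrix} \mathbf{D}_2 & \mathbf{C}_2\\ \mathbf{B}_2 & \mathbf{A}_2 \end{bmatrix} \begin{bmatrix} I & L_2 \\ 0 & I \end{bmatrix} = \begin{bmatrix} \mathbf{H}_2' & 0 \\ \mathbf{B}_2 & \mathbf{H}_2 \end{bmatrix}, \] where $\mathbf{H}_1 = \mathbf{A}_1 + \mathbf{B}_1L_1$, $\mathbf{H}_1' = \mathbf{D}_1 -L_1 \mathbf{B}_1$, $\mathbf{H}_2 = \mathbf{A}_2 + \mathbf{B}_2 L_2$, and $\mathbf{H}_2' = \mathbf{D}_2 - L_2 \mathbf{B}_2$. Furthermore, the spectrum of the $\mathbf{M}_1$-invariant subspace spanned by $[I; L_1]$ is $\operatorname{spec}(\mathbf{H}_1)$, the spectrum of the $\mathbf{M}_2$-invariant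 subspace spanned by $[L_2; I]$ is $\operatorname{spec}(\mathbf{H}_2)$, \[ \mathbf{H}_1 = \mathbf{A}_1 + \mathbf{B}_1L_1 = (D_2^\top + B_2 L_1 )^{-1}(A_1 + B_1^\top L_1 ), \qquad \mathbf{H}_2' = \mathbf{D}_2 - L_2 \mathbf{B}_2 = (A_1 + B_1^\top L_1)^{-\top}(D_2^\top + B_2L_1)^\top, \] and $\mathbf{H}_2'$ is similar to $\mathbf{H}_1^{-\top}$.
   Context: Two-player quadratic game with cost blocks $A_i\succ 0$, $B_i\in\mathbb{R}^{d_{-i}\times d_i}$, $D_i$ for player $i$ (cost $f_i=\tfrac12[x_i;x_{-i}]^\top\begin{bmatrix}A_i & B_i^\top\\ B_i& D_i\end{bmatrix}[x_i;x_{-i}]+a_i^\top x_i+b_i^\top x_{-i}$, $x_i\in\mathbb{R}^{d_i}$), affine conjectures $x_{-i}=L_ix_i+\ell_i$. $M_1=\begin{bmatrix}A_1 & B_1^\top\\ B_1 & D_1\end{bmatrix}$ and $M_2=\begin{bmatrix}D_2 & B_2\\ B_2^\top & A_2\end{bmatrix}$ are invertible; $\mathbf{M}_1=M_2^{-\top}M_1=\begin{bmatrix}\mathbf{A}_1 & \mathbf{B}_1\\ \mathbf{C}_1 & \mathbf{D}_1\end{bmatrix}$ and $\mathbf{M}_2=M_1^{-\top}M_2=\begin{bmatrix}\mathbf{D}_2 & \mathbf{C}_2\\ \mathbf{B}_2 & \mathbf{A}_2\end{bmatrix}$. The fixed-point update for $L_1$ is the composite best-response conjecture update; $L_2$ is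 player 2's consistent conjecture given $L_1$ (assuming $A_1 + B_1^\top L_1$ invertible). $I$ denotes the identity matrix of appropriate size. *)

From HB Require Import structures.
From mathcomp Require Import all_boot all_order all_algebra.
Set Implicit Arguments. Unset Strict Implicit. Unset Printing Implicit Defensive.
Import Order.TTheory GRing.Theory Num.Theory.
Local Open Scope ring_scope.

Definition posdef (R : realFieldType) (n : nat) (A : 'M[R]_n) : Prop :=
  A^T = A /\ forall x : 'cV[R]_n, x != 0 -> 0 < (x^T *m A *m x) 0 0.

(* X spans an M-invariant subspace and the spectrum of M restricted to that
   subspace is given by the characteristic polynomial p: the restriction of M
   to span(X), expressed in the basis formed by the columns of X, is any K
   with M X = X K; its spectrum is the root set (with multiplicities) of
   char_poly K. *)
Definition invariant_subspace_spectrum (R : fieldType) (n k : nat)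
    (M : 'M[R]_n) (X : 'M[R]_(n, k)) (p : {poly R}) : Prop :=
  (exists K : 'M[R]_k, M *m X = X *m K) /\
  (forall K : 'M[R]_k, M *m X = X *m K -> char_poly K = p).

From HB Require Import structures.
From mathcomp Require Import all_boot all_order all_algebra.
Set Implicit Arguments. Unset Strict Implicit. Unset Printing Implicit Defensive.
Import Order.TTheory GRing.Theory Num.Theory.
Local Open Scope ring_scope.

(* Write X = [I; L1], Y = [L2; I], G = A1 + B1^T L1 and F = D2^T + B2 L1.  The
   fixed-point equation for L1 is the Riccati equation L1 H1 = C1 + D1 L1, i.e.
   bM1 X = X H1: it block-triangularises bM1, makes span X invariant, and, as
   M2^T bM1 = M1, reads M1 X = M2^T X H1, whose top block is G = F H1.  The
   definition of L2 says exactly Y^T M1 X = 0, hence also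
   Y^T M2^T X = Y^T M1 X H1^-1 = 0.  So M1^T Y and M2 Y both lie in the left
   kernel of X, spanned by [-L1^T; I], which makes span Y invariant under
   bM2 = M1^-T M2: this is the Riccati equation for L2.  Multiplying the first
   block column of the triangularised bM2 by X^T M1^T gives G^T H2' = F^T, so
   H2' = G^-T F^T = G^-T H1^-T G^T. *)

Section BlockGraphs.
Variables (R : pzRingType) (m n : nat).

Lemma mul_block_col_1L_eq (A : 'M[R]_m) (B : 'M[R]_(m, n)) (C : 'M[R]_(n, m))
    (D : 'M[R]_n) (L : 'M[R]_(n, m)) (K : 'M[R]_m) :
  block_mx A B C D *m col_mx 1%:M L = col_mx 1%:M L *m K <->
  K = A + B *m L /\ L *m K = C + D *m L.
Proof.
rewrite mul_block_col mul_col_mx mul1mx !mulmx1.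
by split=> [/eq_col_mx[-> ->] | [-> ->]].
Qed.

Lemma mul_block_col_L1_eq (D : 'M[R]_m) (C : 'M[R]_(m, n)) (B : 'M[R]_(n, m))
    (A : 'M[R]_n) (L : 'M[R]_(m, n)) (K : 'M[R]_n) :
  block_mx D C B A *m col_mx L 1%:M = col_mx L 1%:M *m K <->
  K = A + B *m L /\ L *m K = D *m L + C.
Proof.
rewrite mul_block_col mul_col_mx mul1mx !mulmx1 (addrC A).
by split=> [/eq_col_mx[-> ->] | [-> ->]].
Qed.

Lemma block_lower_similar (A : 'M[R]_m) (B : 'M[R]_(m, n)) (C : 'M[R]_(n, m))
    (D : 'M[R]_n) (L : 'M[R]_(n, m)) :
  L *m (A + B *m L) = C + D *m L ->
  block_mx 1%:M 0 (- L) 1%:M *m block_mx A B C D *m block_mx 1%:M 0 L 1%:M =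
  block_mx (A + B *m L) B 0 (D - L *m B).
Proof.
move=> riccati; rewrite !mulmx_block !(mul1mx, mul0mx, mulmx1, mulmx0, addr0, add0r).
congr block_mx; last by rewrite mulNmx addrC.
by rewrite mulmxDl !mulNmx -mulmxA addrACA -opprD -mulmxDr riccati addrC subrr.
Qed.

Lemma block_upper_similar (D : 'M[R]_m) (C : 'M[R]_(m, n)) (B : 'M[R]_(n, m))
    (A : 'M[R]_n) (L : 'M[R]_(m, n)) :
  L *m (A + B *m L) = D *m L + C ->
  block_mx 1%:M (- L) 0 1%:M *m block_mx D C B A *m block_mx 1%:M L 0 1%:M =
  block_mx (D - L *m B) 0 B (A + B *m L).
Proof.
move=> riccati; rewrite !mulmx_block !(mul1mx, mul0mx, mulmx1, mulmx0, addr0, add0r).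
congr block_mx; [by rewrite mulNmx | | by rewrite addrC].
rewrite mulmxDl !mulNmx -mulmxA addrACA -opprD -mulmxDr (addrC (B *m L)).
by rewrite riccati subrr.
Qed.

Lemma tr_col_1L_mul_eq0 (L : 'M[R]_(n, m)) k (V : 'M[R]_(m + n, k)) :
  (col_mx 1%:M L)^T *m V = 0 -> V = col_mx (- L^T) 1%:M *m dsubmx V.
Proof.
rewrite -{1 2}[V]vsubmxK tr_col_mx trmx1 mul_row_col mul1mx => /eqP.
by rewrite addr_eq0 => /eqP topV; rewrite mul_col_mx mul1mx mulNmx -topV.
Qed.

End BlockGraphs.

Section GraphSpectrum.
Variable R : fieldType.

Lemma invariant_subspace_spectrum_linv p k (M : 'M[R]_p) (X : 'M[R]_(p, k))
    (Y : 'M[R]_(k, p)) (H : 'M[R]_k) :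
  Y *m X = 1%:M -> M *m X = X *m H -> invariant_subspace_spectrum M X (char_poly H).
Proof.
move=> YX1 MXH; split=> [|K MXK]; first by exists H.
by rewrite -[K]mul1mx -[H]mul1mx -YX1 -!mulmxA -MXH -MXK.
Qed.

Variables m n : nat.

Lemma invariant_col_1L_spectrum (M : 'M[R]_(m + n)) (L : 'M[R]_(n, m)) (H : 'M[R]_m) :
  M *m col_mx 1%:M L = col_mx 1%:M L *m H ->
  invariant_subspace_spectrum M (col_mx 1%:M L) (char_poly H).
Proof.
apply: (invariant_subspace_spectrum_linv (Y := row_mx 1%:M 0)).
by rewrite mul_row_col mul1mx mul0mx addr0.
Qed.

Lemma invariant_col_L1_spectrum (M : 'M[R]_(m + n)) (L : 'M[R]_(m, n)) (H : 'M[R]_n) :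
  M *m col_mx L 1%:M = col_mx L 1%:M *m H ->
  invariant_subspace_spectrum M (col_mx L 1%:M) (char_poly H).
Proof.
apply: (invariant_subspace_spectrum_linv (Y := row_mx 0 1%:M)).
by rewrite mul_row_col mul1mx mul0mx add0r.
Qed.

End GraphSpectrum.

Section CompanionPencils.
Variables (R : fieldType) (m n : nat) (M1 M2 : 'M[R]_(m + n)).
Variables (L1 : 'M[R]_(n, m)) (L2 : 'M[R]_(m, n)) (H1 : 'M[R]_m).
Let X := col_mx 1%:M L1.
Let Y := col_mx L2 1%:M.
Hypotheses (uM1 : M1 \in unitmx) (uM2 : M2 \in unitmx) (uH1 : H1 \in unitmx).
Hypothesis invX : (invmx M2)^T *m M1 *m X = X *m H1.
Hypothesis orthYX : Y^T *m M1 *m X = 0.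

Lemma col_1L_pencil_eq : M1 *m X = M2^T *m X *m H1.
Proof.
rewrite -mulmxA -invX !mulmxA trmx_inv.
by rewrite mulmxV ?unitmx_tr // mul1mx.
Qed.

Lemma orthogonal_M1tr : X^T *m M1^T *m Y = 0.
Proof. by move/(congr1 trmx): orthYX; rewrite !trmx_mul !trmxK trmx0 mulmxA. Qed.

Lemma orthogonal_M2 : X^T *m M2 *m Y = 0.
Proof.
have orthM2tr : Y^T *m M2^T *m X = 0.
  rewrite -mulmxA; have -> : M2^T *m X = M1 *m X *m invmx H1.
    by rewrite col_1L_pencil_eq mulmxK.
  by rewrite !mulmxA orthYX mul0mx.
by move/(congr1 trmx): orthM2tr; rewrite !trmx_mul !trmxK trmx0 mulmxA.
Qed.

Lemma col_L1_invariant : exists K, (invmx M1)^T *m M2 *m Y = Y *m K.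
Proof.
have := orthogonal_M1tr; have := orthogonal_M2.
rewrite -mulmxA -(mulmxA X^T M1^T) => /tr_col_1L_mul_eq0 eT /tr_col_1L_mul_eq0 eS.
set Z := col_mx _ _ in eS eT; set S := dsubmx _ in eS; set T := dsubmx _ in eT.
have uM1t : M1^T \in unitmx by rewrite unitmx_tr.
have defY : Y = invmx M1^T *m Z *m S by rewrite -mulmxA -eS mulKmx.
have uS : S \in unitmx.
  move: defY; rewrite -[invmx M1^T *m Z]vsubmxK mul_col_mx => /eq_col_mx[_].
  by case/esym/mulmx1_unit.
exists (invmx S *m T).
by rewrite -mulmxA eT trmx_inv mulmxA defY -(mulmxA _ S) mulKVmx.
Qed.

Lemma companion_ulsubmx_eq :
  (usubmx (M1 *m X))^T *m
    (ulsubmx ((invmx M1)^T *m M2) - L2 *m dlsubmx ((invmx M1)^T *m M2)) =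
  (usubmx (M2^T *m X))^T.
Proof.
set bM2 := (invmx M1)^T *m M2; set E : 'M[R]_(m + n, m) := col_mx 1%:M 0.
have trE (P : 'M[R]_(m + n, m)) : P^T *m E = (usubmx P)^T.
  by rewrite -{1}[P]vsubmxK tr_col_mx mul_row_col mulmx1 mulmx0 addr0.
have colE : bM2 *m E = E *m (ulsubmx bM2 - L2 *m dlsubmx bM2) + Y *m dlsubmx bM2.
  rewrite -{1}[bM2]submxK mul_block_col !mul_col_mx !mulmx1 !mulmx0 !addr0.
  by rewrite !mul1mx mul0mx add_col_mx add0r subrK.
rewrite -!trE !trmx_mul trmxK.
have -> : X^T *m M2 = X^T *m M1^T *m bM2.
  by rewrite /bM2 trmx_inv -mulmxA mulKVmx ?unitmx_tr.
rewrite -(mulmxA _ bM2) colE (mulmxDr (X^T *m M1^T)) !mulmxA.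
by rewrite orthogonal_M1tr mul0mx addr0.
Qed.

End CompanionPencils.

Lemma tr_inv_similar (R : fieldType) n (G F H : 'M[R]_n) :
  G \in unitmx -> G = F *m H ->
  exists2 P, P \in unitmx & (invmx G)^T *m F^T = P *m (invmx H)^T *m invmx P.
Proof.
move=> uG GFH; have /andP[_ uH] : (F \in unitmx) && (H \in unitmx).
  by rewrite -unitmx_mul -GFH.
have invH : invmx H = invmx G *m F.
  by rewrite -[RHS](mulmxK uH) -(mulmxA (invmx G)) -GFH mulVmx // mul1mx.
exists (invmx G)^T; first by rewrite unitmx_tr unitmx_inv.
by rewrite invH trmx_mul !trmx_inv invmxK mulmxA mulmxKV ?unitmx_tr.
Qed.

Theorem proposition4 (R : realFieldType) (d1 d2 : nat)
  (A1 : 'M[R]_d1) (B1 : 'M[R]_(d2, d1)) (D1 : 'M[R]_d2)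
  (A2 : 'M[R]_d2) (B2 : 'M[R]_(d1, d2)) (D2 : 'M[R]_d1)
  (L1 : 'M[R]_(d2, d1)) (L2 : 'M[R]_(d1, d2)) :
  let M1 : 'M[R]_(d1 + d2) := block_mx A1 B1^T B1 D1 in
  let M2 : 'M[R]_(d1 + d2) := block_mx D2 B2 B2^T A2 in
  let bM1 := (invmx M2)^T *m M1 in
  let bM2 := (invmx M1)^T *m M2 in
  let bA1 : 'M[R]_(d1, d1) := ulsubmx bM1 in
  let bB1 : 'M[R]_(d1, d2) := ursubmx bM1 in
  let bC1 : 'M[R]_(d2, d1) := dlsubmx bM1 in
  let bD1 : 'M[R]_(d2, d2) := drsubmx bM1 in
  let bD2 : 'M[R]_(d1, d1) := ulsubmx bM2 in
  let bC2 : 'M[R]_(d1, d2) := ursubmx bM2 in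
  let bB2 : 'M[R]_(d2, d1) := dlsubmx bM2 in
  let bA2 : 'M[R]_(d2, d2) := drsubmx bM2 in
  let H1 := bA1 + bB1 *m L1 in
  let H1' := bD1 - L1 *m bB1 in
  let H2 := bA2 + bB2 *m L2 in
  let H2' := bD2 - L2 *m bB2 in
  posdef A1 -> posdef A2 ->
  M1 \in unitmx -> M2 \in unitmx ->
  (A1 + B1^T *m L1) \in unitmx ->
  (* L1 is a fixed point of L1^+ = (C1 + D1 L1)(A1 + B1 L1)^{-1} *)
  H1 \in unitmx ->
  L1 = (bC1 + bD1 *m L1) *m invmx H1 ->
  (* definition of L2 *)
  L2^T = - ((B1 + D1 *m L1) *m invmx (A1 + B1^T *m L1)) ->
  [/\ block_mx 1%:M 0 (- L1) 1%:M *m block_mx bA1 bB1 bC1 bD1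
        *m block_mx 1%:M 0 L1 1%:M = block_mx H1 bB1 0 H1',
      block_mx 1%:M (- L2) 0 1%:M *m block_mx bD2 bC2 bB2 bA2
        *m block_mx 1%:M L2 0 1%:M = block_mx H2' 0 bB2 H2,
      invariant_subspace_spectrum bM1 (col_mx 1%:M L1) (char_poly H1),
      invariant_subspace_spectrum bM2 (col_mx L2 1%:M) (char_poly H2) &
      [/\ (D2^T + B2 *m L1) \in unitmx /\
        H1 = invmx (D2^T + B2 *m L1) *m (A1 + B1^T *m L1),
      H2' = (invmx (A1 + B1^T *m L1))^T *m (D2^T + B2 *m L1)^T &
      exists2 P : 'M[R]_d1, P \in unitmx & H2' = P *m (invmx H1)^T *m invmx P]].
Proof.
move=> M1 M2 bM1 bM2 bA1 bB1 bC1 bD1 bD2 bC2 bB2 bA2 H1 H1' H2 H2'.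
move=> _ _ uM1 uM2 uG uH1 fixL1 defL2.
have ricL1 : L1 *m H1 = bC1 + bD1 *m L1 by rewrite {1}fixL1 mulmxKV.
have invX : bM1 *m col_mx 1%:M L1 = col_mx 1%:M L1 *m H1.
  by rewrite -[bM1]submxK; apply/mul_block_col_1L_eq.
have orthYX : (col_mx L2 1%:M)^T *m M1 *m col_mx 1%:M L1 = 0.
  rewrite -mulmxA mul_block_col tr_col_mx trmx1 mul_row_col mul1mx !mulmx1.
  by rewrite defL2 mulNmx mulmxKV // addNr.
have [K invY] := col_L1_invariant uM1 uM2 uH1 invX orthYX.
have [eK ricL2] : K = H2 /\ L2 *m H2 = bD2 *m L2 + bC2.
  by move: invY; rewrite -/bM2 -[bM2]submxK => /mul_block_col_L1_eq[->].
have eG : usubmx (M1 *m col_mx 1%:M L1) = A1 + B1^T *m L1.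
  by rewrite mul_block_col col_mxKu mulmx1.
have eF : usubmx (M2^T *m col_mx 1%:M L1) = D2^T + B2 *m L1.
  by rewrite tr_block_mx trmxK mul_block_col col_mxKu mulmx1.
have GFH1 : A1 + B1^T *m L1 = (D2^T + B2 *m L1) *m H1.
  by rewrite -eG -eF mul_usub_mx (col_1L_pencil_eq uM2 invX).
have /andP[uF _] : (D2^T + B2 *m L1 \in unitmx) && (H1 \in unitmx).
  by rewrite -unitmx_mul -GFH1.
have eH2' : H2' = (invmx (A1 + B1^T *m L1))^T *m (D2^T + B2 *m L1)^T.
  rewrite -eF -(companion_ulsubmx_eq M2 uM1 orthYX) eG.
  by rewrite trmx_inv mulKmx ?unitmx_tr.
split.
- exact: block_lower_similar.
- exact: block_upper_similar.
- exact: invariant_col_1L_spectrum.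
- by apply: invariant_col_L1_spectrum; rewrite invY eK.
- split=> //; first by rewrite GFH1 mulKmx.
  by rewrite eH2'; apply: tr_inv_similar.
Qed.
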